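(* Let $(\alpha_N)_{N\ge0}\subseteq[0,1]$ converge to some $\alpha$, and let $L_N=\log_2(N)/5$ (rounded to an integer). For $q\in[0,1]$ let $Z_0,Z_1,\dots$ be a Galton–Watson-type process with $Z_0\sim$ Bernoulli$(q)$, where each individual of generation $0$ has a Binomial$(3,q)$ number of children and each individual of every later generation has a Binomial$(2,q)$ number of children, independently. Then there is $C'>0$, independent of $q$ and $N$, such that for all $N$, $$\Big|\mathbb E\big(Z_0(1-\alpha_N)^{Z_0+Z_1+\cdots+Z_{L_N-1}}\big)-g_{\alpha_N}(q)\Big|\le C'e^{-\alpha_NL_N},$$ and the same bound holds with $\mathbb E\big(Z_0(1-\alpha_N)^{Z_0+\cdots+Z_{L_N-1}}\mathbf 1_{\{Z_{L_N-1}=0\}}\big)$ in place of the first expectation.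
   Context: For $\alpha\in(0,1)$ let $g_\alpha(x)=\frac{(1-\sqrt{1-4(1-\alpha)x(1-x)})^3}{8(1-\alpha)^2x^2}$ for $x\in(0,1]$ and $g_\alpha(0)=0$; let $g_0(x)=x$ for $x\le1/2$ and $g_0(x)=(1-x)^3/x^2$ for $x>1/2$; for $\alpha=1$ set $g_1\equiv0$. *)

From Stdlib Require Import Reals Lra Lia ZArith.
Open Scope R_scope.

Definition g (a x : R) : R :=
  if Req_EM_T a 1 then 0
  else if Req_EM_T a 0 then
    (if Rle_dec x (1/2) then x else (1 - x) ^ 3 / x ^ 2)
  else if Req_EM_T x 0 then 0
  else (1 - sqrt (1 - 4 * (1 - a) * x * (1 - x))) ^ 3 / (8 * (1 - a) ^ 2 * x ^ 2).

Definition binom_pmf (n : nat) (q : R) (m : nat) : R :=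
  C n m * q ^ m * (1 - q) ^ (n - m).

(* W ind q s r c n : conditional expectation, given that the current
   generation has n individuals each having Binomial(c,q) children (later
   generations Binomial(2,q)), of s^(sum of this and the next r generation
   sizes), multiplied (if ind) by the indicator that the last of these
   generations is empty. *)
Fixpoint W (ind : bool) (q s : R) (r c n : nat) : R :=
  match r with
  | O => s ^ n * (if ind then (if Nat.eqb n 0 then 1 else 0) else 1)
  | S r' => s ^ n * sum_f_R0 (fun m => binom_pmf (c * n) q m * W ind q s r' 2 m) (c * n)
  end.

(* E( Z_0 * s^(Z_0+...+Z_{L-1}) * [1_{Z_{L-1}=0} if ind] ) with Z_0 ~ Bernoulli(q),
   generation 0 offspring Binomial(3,q), later offspring Binomial(2,q).
   For L = 0 the sum is empty (and no indicator is applied). *)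
Definition GW_expect (ind : bool) (q s : R) (L : nat) : R :=
  match L with
  | O => sum_f_R0 (fun z0 => binom_pmf 1 q z0 * INR z0) 1
  | S L' => sum_f_R0 (fun z0 => binom_pmf 1 q z0 * INR z0 * W ind q s L' 3 z0) 1
  end.

(* nearest integer (halves rounded up), as a nat *)
Definition round_nat (x : R) : nat := Z.to_nat (up (x + / 2) - 1).

Definition log2 (x : R) : R := ln x / ln 2.

Definition LN (N : nat) : nat := round_nat (log2 (INR N) / 5).

From Stdlib Require Import Reals Lra Psatz.
Open Scope R_scope.

(* Write s = 1 - alpha. Conditioning on each generation and using the independence of
   the subtrees, the expectation equals q s y^3, where y is obtained from 1 (from 0 when
   the indicator is present) by L - 1 iterations of x |-> 1 - q + q s x^2. This map sends
   [0,1] into itself and has the fixed point u = 2 (1 - q) / (1 + sqrt (1 - 4 s q (1 - q))),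
   with g_alpha(q) = q s u^3. Since q u <= 1 - q, the map contracts towards u by the
   factor s on [0,1], so |y - u| <= s^(L-1) and |E - g_alpha(q)| <= 3 s^L <= 3 e^(-alpha L). *)

Definition gw_step (q s x : R) : R := 1 - q + q * s * x ^ 2.

Definition gw_disc (a q : R) : R := 1 - 4 * (1 - a) * q * (1 - q).

Definition gw_fixpoint (a q : R) : R := 2 * (1 - q) / (1 + sqrt (gw_disc a q)).

Definition leaf_weight (ind : bool) : R := if ind then 0 else 1.

Definition gw_iterate (ind : bool) (q s : R) (r : nat) : R :=
  Nat.iter r (gw_step q s) (leaf_weight ind).

Lemma W_closed_form ind q s r : forall c n, (0 < c)%nat ->
  W ind q s r c n = (s * gw_iterate ind q s r ^ c) ^ n.
Proof.
  induction r as [|r IH]; intros c n Hc.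
  - destruct c as [|c]; [lia|].
    destruct ind, n; simpl; rewrite ?pow1, ?Rmult_1_r; ring.
  - assert (Hsum : forall k, sum_f_R0 (fun m => binom_pmf k q m * W ind q s r 2 m) k
                             = gw_step q s (gw_iterate ind q s r) ^ k).
    { intro k. unfold gw_step.
      replace (1 - q + q * s * gw_iterate ind q s r ^ 2)
        with (q * (s * gw_iterate ind q s r ^ 2) + (1 - q)) by ring.
      rewrite binomial. apply sum_eq. intros m _.
      unfold binom_pmf. rewrite (IH 2%nat m) by lia. rewrite !Rpow_mult_distr. ring. }
    simpl W. rewrite Hsum, pow_mult, <- Rpow_mult_distr. reflexivity.
Qed.

Lemma GW_expect_0 ind q s : GW_expect ind q s 0 = q.
Proof. unfold GW_expect, binom_pmf, C. simpl. field. Qed.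

Lemma GW_expect_S ind q s L :
  GW_expect ind q s (S L) = q * s * gw_iterate ind q s L ^ 3.
Proof.
  unfold GW_expect, binom_pmf, C. simpl.
  rewrite (W_closed_form ind q s L 3 1) by lia. field.
Qed.

Section FixedPoint.

Variables a q : R.
Hypothesis Ha : 0 <= a <= 1.
Hypothesis Hq : 0 <= q <= 1.

Let root := sqrt (gw_disc a q).
Let u := gw_fixpoint a q.

Lemma gw_root_bounds : root * root = gw_disc a q /\ 1 - 2 * q <= root /\ 2 * q - 1 <= root.
Proof.
  destruct Ha, Hq.
  assert (Hqq : 0 <= q * (1 - q)) by nra.
  assert (Hqq' : q * (1 - q) <= 1 / 4) by (pose proof (pow2_ge_0 (q - 1 / 2)); nra).
  assert (Hsq : root * root = gw_disc a q).
  { unfold root. apply sqrt_sqrt. unfold gw_disc.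
    assert ((1 - a) * (q * (1 - q)) <= 1 / 4) by nra. nra. }
  assert (Hpos : 0 <= root) by apply sqrt_pos.
  assert (Hdom : (1 - 2 * q) ^ 2 <= root * root)
    by (rewrite Hsq; unfold gw_disc; assert (0 <= a * (q * (1 - q))) by nra; nra).
  repeat split; [exact Hsq | nra | nra].
Qed.

Lemma gw_fixpoint_mul : u * (1 + root) = 2 * (1 - q).
Proof.
  assert (0 <= root) by apply sqrt_pos.
  unfold u, gw_fixpoint. fold root. field. lra.
Qed.

Lemma gw_fixpoint_range : 0 <= u <= 1 /\ q * u <= 1 - q.
Proof.
  destruct gw_root_bounds as [_ [Hlo Hhi]]. pose proof gw_fixpoint_mul.
  assert (0 <= root) by apply sqrt_pos. nra.
Qed.

Lemma gw_root_complement : 1 - root = 2 * (1 - a) * q * u.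
Proof.
  destruct gw_root_bounds as [Hsq _]. pose proof gw_fixpoint_mul as Hmul.
  assert (0 <= root) by apply sqrt_pos.
  apply (Rmult_eq_reg_l (1 + root)); [| lra].
  unfold gw_disc in Hsq. nra.
Qed.

Lemma gw_fixpoint_eq : gw_step q (1 - a) u = u.
Proof.
  pose proof gw_root_complement. pose proof gw_fixpoint_mul.
  unfold gw_step. nra.
Qed.

Lemma g_eq_gw_fixpoint : g a q = q * (1 - a) * u ^ 3.
Proof.
  pose proof gw_fixpoint_eq as Hfix. destruct gw_fixpoint_range as [Hu Hqu].
  unfold g, gw_step in *.
  destruct (Req_EM_T a 1) as [->|Ha1]; [ring|].
  destruct (Req_EM_T a 0) as [->|Ha0].
  - (* For [a = 0] the fixed point equation factors as [(u - 1) (q u - (1 - q)) = 0]. *)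
    assert (Hfact : (u - 1) * (q * u - (1 - q)) = 0) by nra.
    destruct (Rle_dec q (1 / 2)).
    + assert (Hu1 : u = 1) by (apply Rmult_integral in Hfact; destruct Hfact; nra).
      rewrite Hu1. ring.
    + assert (Hqu' : q * u = 1 - q) by (apply Rmult_integral in Hfact; destruct Hfact; nra).
      rewrite <- Hqu'. field. lra.
  - destruct (Req_EM_T q 0) as [->|Hq0]; [ring|].
    change (sqrt (1 - 4 * (1 - a) * q * (1 - q))) with root.
    rewrite gw_root_complement. field. split; [exact Hq0 | lra].
Qed.

End FixedPoint.

Lemma gw_step_range q s x : 0 <= q <= 1 -> 0 <= s <= 1 -> 0 <= x <= 1 ->
  0 <= gw_step q s x <= 1.
Proof.
  intros Hq Hs Hx. unfold gw_step.
  assert (0 <= s * x ^ 2 <= 1) by (split; nra).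
  split; nra.
Qed.

(* Contraction towards the fixed point: [gw_step x - u = q s (x + u) (x - u)] and [q (x + u) <= 1]. *)
Lemma gw_step_contract q s u x : 0 <= q <= 1 -> 0 <= s <= 1 -> 0 <= x <= 1 ->
  0 <= u -> q * u <= 1 - q -> gw_step q s u = u ->
  Rabs (gw_step q s x - u) <= s * Rabs (x - u).
Proof.
  intros [Hq0 Hq1] [Hs0 Hs1] [Hx0 Hx1] Hu Hqu Hfix.
  rewrite <- Hfix at 1.
  replace (gw_step q s x - gw_step q s u) with ((s * (q * (x + u))) * (x - u))
    by (unfold gw_step; ring).
  assert (Hqxu : 0 <= q * (x + u) <= 1) by (split; nra).
  rewrite Rabs_mult, (Rabs_right (s * _)) by (apply Rle_ge, Rmult_le_pos; lra).
  apply Rmult_le_compat_r; [apply Rabs_pos | nra].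
Qed.

Lemma gw_iterate_approx ind a q r : 0 <= a <= 1 -> 0 <= q <= 1 ->
  0 <= gw_iterate ind q (1 - a) r <= 1 /\
  Rabs (gw_iterate ind q (1 - a) r - gw_fixpoint a q) <= (1 - a) ^ r.
Proof.
  intros Ha Hq.
  destruct (gw_fixpoint_range a q Ha Hq) as [Hu Hqu].
  assert (Hs : 0 <= 1 - a <= 1) by lra.
  induction r as [|r [Hy Hdist]].
  - assert (0 <= leaf_weight ind <= 1) by (destruct ind; simpl; lra).
    simpl. split; [assumption|]. apply Rabs_le. lra.
  - change (gw_iterate ind q (1 - a) (S r))
      with (gw_step q (1 - a) (gw_iterate ind q (1 - a) r)).
    split; [now apply gw_step_range|].
    eapply Rle_trans.
    + apply gw_step_contract; try lra. exact (gw_fixpoint_eq a q Ha Hq).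
    + simpl. apply Rmult_le_compat_l; lra.
Qed.

Lemma GW_expect_approx ind a q L : 0 <= a <= 1 -> 0 <= q <= 1 ->
  Rabs (GW_expect ind q (1 - a) L - g a q) <= 3 * (1 - a) ^ L.
Proof.
  intros Ha Hq.
  rewrite (g_eq_gw_fixpoint a q Ha Hq).
  destruct (gw_fixpoint_range a q Ha Hq) as [Hu _].
  pose proof (fun r => gw_iterate_approx ind a q r Ha Hq) as Happrox.
  set (u := gw_fixpoint a q) in *.
  assert (Hu3 : 0 <= u ^ 3 <= 1) by (simpl; split; nra).
  assert (Hqs : 0 <= q * (1 - a) <= 1) by (split; nra).
  destruct L as [|r].
  - rewrite GW_expect_0. simpl. apply Rabs_le. nra.
  - rewrite GW_expect_S.
    destruct (Happrox r) as [Hy Hdist].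
    set (y := gw_iterate ind q (1 - a) r) in *.
    replace (q * (1 - a) * y ^ 3 - q * (1 - a) * u ^ 3)
      with (q * (1 - a) * (y ^ 2 + y * u + u ^ 2) * (y - u)) by ring.
    assert (Hpoly : 0 <= y ^ 2 + y * u + u ^ 2 <= 3) by (split; nra).
    assert (Hfactor : 0 <= q * (1 - a) * (y ^ 2 + y * u + u ^ 2) <= 3 * (1 - a))
      by (split; nra).
    rewrite Rabs_mult, Rabs_right by lra.
    change ((1 - a) ^ S r) with ((1 - a) * (1 - a) ^ r).
    rewrite <- Rmult_assoc.
    apply Rmult_le_compat; solve [lra | apply Rabs_pos].
Qed.

Lemma exp_mul_INR x n : exp (x * INR n) = exp x ^ n.
Proof.
  induction n as [|n IH].
  - simpl. rewrite Rmult_0_r. apply exp_0.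
  - rewrite S_INR, Rmult_plus_distr_l, Rmult_1_r, exp_plus, IH. simpl. ring.
Qed.

Lemma pow_one_sub_le_exp a n : 0 <= a <= 1 -> (1 - a) ^ n <= exp (- a * INR n).
Proof.
  intros Ha. rewrite exp_mul_INR. apply pow_incr.
  pose proof (exp_ineq1_le (- a)). lra.
Qed.

Theorem mainTheorem11 (alphaN : nat -> R) (alpha : R)
  (Hrange : forall N, 0 <= alphaN N <= 1)
  (Hcv : Un_cv alphaN alpha) :
  exists C' : R, 0 < C' /\
    forall (q : R) (N : nat), 0 <= q <= 1 -> (1 <= N)%nat ->
      Rabs (GW_expect false q (1 - alphaN N) (LN N) - g (alphaN N) q)
        <= C' * exp (- alphaN N * INR (LN N)) /\
      ((1 <= LN N)%nat ->
      Rabs (GW_expect true q (1 - alphaN N) (LN N) - g (alphaN N) q)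
        <= C' * exp (- alphaN N * INR (LN N))).
Proof.
  (* The bound is uniform in alpha and L. *)
  assert (Hbound : forall ind q N, 0 <= q <= 1 ->
    Rabs (GW_expect ind q (1 - alphaN N) (LN N) - g (alphaN N) q)
      <= 3 * exp (- alphaN N * INR (LN N))).
  { intros ind q N Hq.
    eapply Rle_trans; [now apply GW_expect_approx|].
    apply Rmult_le_compat_l; [lra|]. now apply pow_one_sub_le_exp. }
  exists 3. split; [lra|].
  intros q N Hq _. split; [|intros _]; now apply Hbound.
Qed.
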